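(* (i) Every finite $\mathbf{HpsUL}^\ast$-chain is an $\mathbf{HpsUL}^\ast_\omega$-chain. (ii) Every finite $\mathbf{HpsUL}^\ast$-algebra is an $\mathbf{HpsUL}^\ast_\omega$-algebra.
   Context: An $\mathbf{HpsUL}$-algebra is a structure $\mathcal A=\langle A,\wedge,\vee,\cdot,\backslash,/,e,f,\bot,\top\rangle$ such that: - $\langle A,\wedge,\vee,\bot,\top\rangle$ is a bounded lattice; - $\langle A,\cdot,e\rangle$ is a monoid; - for all $x,y,z$: $xy\le z$ iff $x\le z/y$ iff $y\le x\backslash z$; - for all $x,y,u,v$: $\lambda_u((x\vee y)\backslash x)\vee\rho_v((x\vee y)\backslash y)=e$, where $\lambda_a(b)=(a\backslash(ba))\wedge e$ and $\rho_a(b)=((ab)/a)\wedge e$. The constant $f$ is arbitrary. An $\mathbf{HpsUL}^\ast$-algebra is one additionally satisfying weak commutativity: $xy\le e$ implies $yx\le e$. An $\mathbf{HpsUL}^\ast_\omega$-algebra is an $\mathbf{HpsUL}^\ast$-algebra satisfying $x\backslash e=x^2\backslash e$ for all $x$, where $x^2=x\cdot x$. A chain is a linearly ordered such algebra. *)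

From mathcomp Require Import all_boot.
Set Implicit Arguments.
Unset Strict Implicit.
Unset Printing Implicit Defensive.

(* Signature <A, meet, join, mul, \, /, e, f, bot, top>.
   ldiv x z = x \ z ;  rdiv z y = z / y. *)
Record hpsul_ops (A : Type) := HpsulOps {
  hmeet : A -> A -> A;
  hjoin : A -> A -> A;
  hmul  : A -> A -> A;
  hldiv : A -> A -> A;
  hrdiv : A -> A -> A;
  he    : A;
  hf    : A;
  hbot  : A;
  htop  : A
}.

Section Defs.
Variables (A : Type) (S : hpsul_ops A).

Definition hle (x y : A) : Prop := hmeet S x y = x.

Definition bounded_lattice : Prop :=
  [/\ (forall x y z, hmeet S x (hmeet S y z) = hmeet S (hmeet S x y) z),
      (forall x y z, hjoin S x (hjoin S y z) = hjoin S (hjoin S x y) z),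
      (forall x y, hmeet S x y = hmeet S y x) &
      (forall x y, hjoin S x y = hjoin S y x)] /\
  [/\ (forall x y, hmeet S x (hjoin S x y) = x),
      (forall x y, hjoin S x (hmeet S x y) = x) &
      (forall x, hle (hbot S) x /\ hle x (htop S))].

Definition monoid_law : Prop :=
  [/\ (forall x y z, hmul S x (hmul S y z) = hmul S (hmul S x y) z),
      (forall x, hmul S (he S) x = x) &
      (forall x, hmul S x (he S) = x)].

Definition residuated : Prop :=
  forall x y z,
    (hle (hmul S x y) z <-> hle x (hrdiv S z y)) /\
    (hle x (hrdiv S z y) <-> hle y (hldiv S x z)).

Definition hlambda (a b : A) : A := hmeet S (hldiv S a (hmul S b a)) (he S).
Definition hrho (a b : A) : A := hmeet S (hrdiv S (hmul S a b) a) (he S).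

Definition psl_identity : Prop :=
  forall x y u v,
    hjoin S (hlambda u (hldiv S (hjoin S x y) x))
            (hrho v (hldiv S (hjoin S x y) y)) = he S.

Definition HpsUL : Prop :=
  [/\ bounded_lattice, monoid_law, residuated & psl_identity].

Definition weakly_commutative : Prop :=
  forall x y, hle (hmul S x y) (he S) -> hle (hmul S y x) (he S).

Definition HpsUL_star : Prop := HpsUL /\ weakly_commutative.

Definition omega_law : Prop :=
  forall x, hldiv S x (he S) = hldiv S (hmul S x x) (he S).

Definition HpsUL_star_omega : Prop := HpsUL_star /\ omega_law.

Definition is_chain : Prop := forall x y, hle x y \/ hle y x.

End Defs.

From mathcomp Require Import all_boot.
Set Implicit Arguments.
Unset Strict Implicit.
Unset Printing Implicit Defensive.

(* For each z with z ≰ e we find a central idempotent m ≤ e such that the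
   preorder a ≼ b := m·a ≤ b still separates z from e and makes every element
   comparable with e; this is the subdirect decomposition into chains, made
   concrete.  Such an m is reached by descent on the finite lattice: if some w
   is incomparable with e modulo m, the semilinearity identity splits e as the
   join of two negative elements, whose central idempotent cores split m into
   two strictly smaller central idempotents, one of which still separates z.
   Modulo m, the omega law x·y ≤ e <-> x·(x·y) ≤ e follows by comparing the
   powers of x with an idempotent power x^N, which exists by finiteness. *)

Lemma iter_collision (T : finType) (f : T -> T) x :
  exists i j, [/\ i < j, j <= #|T| & iter i f x = iter j f x].
Proof.
have /injectivePn [i [j neq_ij eq_ij]] :
    ~~ injectiveb (fun i : 'I_#|T|.+1 => iter i f x).
  apply/negP => /injectiveP inj.
  by have := @leq_card _ _ _ inj; rewrite card_ord ltnn.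
have le_T (k : 'I_#|T|.+1) : k <= #|T| by rewrite -ltnS.
case: (ltngtP i j) => [lt_ij | lt_ji | /val_inj eq_ij'].
- by exists i, j.
- by exists j, i.
- by rewrite eq_ij' eqxx in neq_ij.
Qed.

Lemma downward_nat_ind (P : nat -> Prop) n : (forall k, P k.+1 -> P k) -> P n -> P 0.
Proof. by move=> down; elim: n => // n IH /down. Qed.

Section FiniteResiduatedLattice.
Variables (T : finType) (S : hpsul_ops T).
Hypotheses (lat : bounded_lattice S) (mon : monoid_law S) (res : residuated S).

Local Notation "x ≤ y" := (hle S x y) (at level 70, no associativity).
Local Notation "x ⊓ y" := (hmeet S x y) (at level 40, left associativity).
Local Notation "x ⊔ y" := (hjoin S x y) (at level 50, left associativity).
Local Notation "x · y" := (hmul S x y) (at level 35, right associativity).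
Local Notation ld := (hldiv S).
Local Notation rd := (hrdiv S).
Local Notation e := (he S).

Lemma hmeetA x y z : x ⊓ (y ⊓ z) = x ⊓ y ⊓ z.
Proof. by case: lat => [[]]. Qed.
Lemma hjoinA x y z : x ⊔ (y ⊔ z) = x ⊔ y ⊔ z.
Proof. by case: lat => [[]]. Qed.
Lemma hmeetC x y : x ⊓ y = y ⊓ x.
Proof. by case: lat => [[]]. Qed.
Lemma hjoinC x y : x ⊔ y = y ⊔ x.
Proof. by case: lat => [[]]. Qed.
Lemma hmeetKU x y : x ⊓ (x ⊔ y) = x.
Proof. by case: lat => _ []. Qed.
Lemma hjoinKI x y : x ⊔ (x ⊓ y) = x.
Proof. by case: lat => _ []. Qed.

Lemma hmulA x y z : x · (y · z) = (x · y) · z.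
Proof. by case: mon. Qed.
Lemma hmul1r x : e · x = x.
Proof. by case: mon. Qed.
Lemma hmulr1 x : x · e = x.
Proof. by case: mon. Qed.

Lemma hle_ldiv x y z : x · y ≤ z <-> y ≤ ld x z.
Proof. by have [? ?] := res x y z; tauto. Qed.
Lemma hle_rdiv x y z : x · y ≤ z <-> x ≤ rd z y.
Proof. by have [? _] := res x y z. Qed.

Lemma hle_refl x : x ≤ x.
Proof. by rewrite /hle -{2}(hjoinKI x x) hmeetKU. Qed.
Lemma hle_trans y x z : x ≤ y -> y ≤ z -> x ≤ z.
Proof. by rewrite /hle => xy yz; rewrite -xy -hmeetA yz. Qed.
Lemma hle_anti x y : x ≤ y -> y ≤ x -> x = y.
Proof. by rewrite /hle => xy yx; rewrite -xy hmeetC yx. Qed.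
Lemma hleIl x y : x ⊓ y ≤ x.
Proof. by rewrite /hle hmeetC hmeetA hle_refl. Qed.
Lemma hleIr x y : x ⊓ y ≤ y.
Proof. by rewrite /hle -hmeetA hle_refl. Qed.
Lemma hlexI x y z : x ≤ y -> x ≤ z -> x ≤ y ⊓ z.
Proof. by rewrite /hle => xy xz; rewrite hmeetA xy xz. Qed.
Lemma hleUl x y : x ≤ x ⊔ y.
Proof. exact: hmeetKU. Qed.
Lemma hleUr x y : y ≤ x ⊔ y.
Proof. by rewrite hjoinC; apply: hleUl. Qed.
Lemma hleUx x y z : x ≤ z -> y ≤ z -> x ⊔ y ≤ z.
Proof.
have joinE a b : a ≤ b -> a ⊔ b = b by move=> <-; rewrite hjoinC hmeetC hjoinKI.
move=> /joinE xz /joinE yz.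
by rewrite /hle [in _ ⊓ z](_ : z = x ⊔ y ⊔ z) ?hmeetKU // -hjoinA yz xz.
Qed.

Lemma hle_mul2l c a b : a ≤ b -> c · a ≤ c · b.
Proof. by move=> ab; apply/hle_ldiv/(hle_trans ab)/hle_ldiv/hle_refl. Qed.
Lemma hle_mul2r c a b : a ≤ b -> a · c ≤ b · c.
Proof. by move=> ab; apply/hle_rdiv/(hle_trans ab)/hle_rdiv/hle_refl. Qed.

Lemma hmulUr c a b : c · (a ⊔ b) = c · a ⊔ c · b.
Proof.
apply: hle_anti; last by apply: hleUx; apply: hle_mul2l; [apply: hleUl | apply: hleUr].
by apply/hle_ldiv/hleUx; apply/hle_ldiv; [apply: hleUl | apply: hleUr].
Qed.
Lemma hmulUl c a b : (a ⊔ b) · c = a · c ⊔ b · c.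
Proof.
apply: hle_anti; last by apply: hleUx; apply: hle_mul2r; [apply: hleUl | apply: hleUr].
by apply/hle_rdiv/hleUx; apply/hle_rdiv; [apply: hleUl | apply: hleUr].
Qed.

Lemma hmulr_le a b : a ≤ e -> b · a ≤ b.
Proof. by rewrite -{2}(hmulr1 b); apply: hle_mul2l. Qed.
Lemma hmull_le a b : a ≤ e -> a · b ≤ b.
Proof. by rewrite -{2}(hmul1r b); apply: hle_mul2r. Qed.

Lemma hldiv1 b : ld e b = b.
Proof.
apply: hle_anti; last by apply/hle_ldiv; rewrite hmul1r; apply: hle_refl.
by have /hle_ldiv := hle_refl (ld e b); rewrite hmul1r.
Qed.
Lemma hrdiv1 b : rd b e = b.
Proof.
apply: hle_anti; last by apply/hle_rdiv; rewrite hmulr1; apply: hle_refl.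
by have /hle_rdiv := hle_refl (rd b e); rewrite hmulr1.
Qed.

Lemma hlambda1 b : hlambda S e b = b ⊓ e.
Proof. by rewrite /hlambda hmulr1 hldiv1. Qed.
Lemma hrho1 b : hrho S e b = b ⊓ e.
Proof. by rewrite /hrho hmul1r hrdiv1. Qed.


Lemma iter_deflationary (f : T -> T) n d : (forall a, f a ≤ a) -> iter n f d ≤ d.
Proof.
by move=> defl; elim: n => [|n IH]; [apply: hle_refl | apply: hle_trans (defl _) IH].
Qed.

Lemma iter_deflationary_fixed (f : T -> T) d :
  (forall a, f a ≤ a) -> f (iter #|T| f d) = iter #|T| f d.
Proof.
move=> defl; have [i [j [lt_ij le_jT eq_ij]]] := iter_collision f d.
have fixed_i : f (iter i f d) = iter i f d.
  apply: hle_anti; first exact: defl.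
  by rewrite {1}eq_ij -(subnK lt_ij) iterD; apply: iter_deflationary.
have le_iT : i <= #|T| by apply: leq_trans (ltnW lt_ij) le_jT.
by rewrite -(subnK le_iT) iterD iter_fix.
Qed.

Definition hpow x n := iter n (hmul S x) e.

Lemma hpowD x m n : hpow x (m + n) = hpow x m · hpow x n.
Proof.
by elim: m => [|m IH]; rewrite ?hmul1r // addSn /hpow iterS -/(hpow _ _) IH hmulA.
Qed.

Lemma hpowSr x n : hpow x n.+1 = hpow x n · x.
Proof. by rewrite -addn1 hpowD /hpow /= hmulr1. Qed.

Lemma hpow2_mul x y : hpow x 2 · y = x · (x · y).
Proof. by rewrite /hpow /= hmulr1 hmulA. Qed.

Lemma exists_idem_hpow x : exists2 N, 2 <= N & hpow x N · hpow x N = hpow x N.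
Proof.
have [i [j [lt_ij _ eq_ij]]] := iter_collision (hmul S x) e.
set p := j - i; have p_gt0 : 0 < p by rewrite subn_gt0.
have period k : i <= k -> hpow x (k + p) = hpow x k.
  move=> le_ik; rewrite -(subnK le_ik) -addnA subnKC ?(ltnW lt_ij) //.
  by rewrite !hpowD -[hpow x j]eq_ij.
have periodM k t : i <= k -> hpow x (k + t * p) = hpow x k.
  move=> le_ik; elim: t => [|t IH]; first by rewrite addn0.
  by rewrite mulSn addnCA addnC period ?IH // (leq_trans le_ik) ?leq_addr.
have le_N : i + 2 <= (i + 2) * p by apply: leq_pmulr.
exists ((i + 2) * p); first exact: leq_trans (leq_addl i 2) le_N.
by rewrite -hpowD periodM // (leq_trans (leq_addr 2 i) le_N).
Qed.

Definition central_idem m := [/\ m ≤ e, m · m = m & forall u, m · u = u · m].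

Lemma central_idem1 : central_idem e.
Proof. by split=> [|//|u]; rewrite ?hmul1r ?hmulr1 //; apply: hle_refl. Qed.

Lemma central_idemM m n : central_idem m -> central_idem n -> central_idem (m · n).
Proof.
move=> [m_le mm m_c] [n_le nn n_c]; split.
- exact: hle_trans (hmull_le _ m_le) n_le.
- by rewrite -hmulA (m_c n) (hmulA n n) nn -(m_c n) hmulA mm.
- by move=> u; rewrite -hmulA n_c hmulA m_c hmulA.
Qed.

(* The order of the quotient by the congruence identifying m with e. *)
Definition le_mod m a b := m · a ≤ b.

Definition total_mod m := forall w, le_mod m w e \/ le_mod m e w.

Section Modulo.
Variable m : T.
Hypotheses (m_idem : central_idem m) (m_total : total_mod m).

Local Notation "a ≼ b" := (le_mod m a b) (at level 70, no associativity).

Lemma le_mod_of_le a b : a ≤ b -> a ≼ b.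
Proof. by case: m_idem => m_le _ _ ab; apply: hle_trans (hmull_le _ m_le) ab. Qed.

Lemma le_mod_refl a : a ≼ a.
Proof. exact/le_mod_of_le/hle_refl. Qed.

Lemma le_mod_trans b a c : a ≼ b -> b ≼ c -> a ≼ c.
Proof.
case: m_idem => _ mm _ ab bc.
by rewrite /le_mod -mm -hmulA; apply: hle_trans (hle_mul2l m ab) bc.
Qed.

Lemma le_mod_mul2l c a b : a ≼ b -> c · a ≼ c · b.
Proof.
by case: m_idem => _ _ m_c ab; rewrite /le_mod hmulA m_c -hmulA; apply: hle_mul2l.
Qed.

Lemma le_mod_mul2r c a b : a ≼ b -> a · c ≼ b · c.
Proof. by move=> ab; rewrite /le_mod hmulA; apply: hle_mul2r. Qed.

Lemma le_mod_sqr_neg x y : x ≼ e -> x · (x · y) ≼ e -> x · y ≼ e.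
Proof.
move=> x_neg xxy_neg; have [//| xy_pos] := m_total (x · y).
have [[|[|n]] // _ u_idem] := exists_idem_hpow x; set u := hpow x n.+2 in u_idem.
have pow_neg k : hpow x k ≼ e.
  elim: k => [|k IH]; first exact: le_mod_refl.
  by apply: le_mod_trans (le_mod_mul2l x IH) _; rewrite hmulr1.
have uy_neg : u · y ≼ e.
  rewrite /u -(addn2 n) hpowD -hmulA hpow2_mul.
  by apply: le_mod_trans (le_mod_mul2l _ xxy_neg) _; rewrite hmulr1.
have uy_le_u : u · y ≼ u.
  by have := le_mod_mul2l u uy_neg; rewrite hmulA u_idem hmulr1.
have e_le_u : e ≼ u.
  apply: (@downward_nat_ind (fun k => hpow x k ≼ u) n.+2) (le_mod_refl u) => k le_u.
  apply: le_mod_trans uy_le_u; rewrite -[hpow x k]hmulr1.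
  apply: le_mod_trans (le_mod_mul2l _ xy_pos) _.
  by rewrite hmulA -hpowSr; apply: le_mod_mul2r.
have u_le_x : u ≼ x.
  rewrite /u hpowSr; apply: le_mod_trans (le_mod_mul2r x (pow_neg _)) _.
  by rewrite hmul1r; apply: le_mod_refl.
apply: le_mod_trans xxy_neg; rewrite -{1}[x · y]hmul1r.
exact/le_mod_mul2r/(le_mod_trans e_le_u).
Qed.

Lemma le_mod_sqr_pos x y : e ≼ x -> x · y ≼ e -> x · (x · y) ≼ e.
Proof.
move=> x_pos xy_neg.
have [[|[|n]] // _ u_idem] := exists_idem_hpow x; set u := hpow x n.+2 in u_idem.
have e_le_pow k : e ≼ hpow x k.
  elim: k => [|k IH]; first exact: le_mod_refl.
  apply: le_mod_trans x_pos _; change (x ≼ x · hpow x k).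
  by rewrite -{1}(hmulr1 x); apply: le_mod_mul2l.
have sqr_le_u : hpow x 2 ≼ u.
  rewrite /u -(add2n n) hpowD.
  by have := le_mod_mul2l (hpow x 2) (e_le_pow n); rewrite hmulr1.
rewrite -hpow2_mul; have [uy_neg | uy_pos] := m_total (u · y).
  exact: le_mod_trans (le_mod_mul2r y sqr_le_u) uy_neg.
have u_le_uy : u ≼ u · y.
  by have := le_mod_mul2l u uy_pos; rewrite hmulr1 hmulA u_idem.
have u_neg : u ≼ e.
  apply: (@downward_nat_ind (fun k => u ≼ hpow x k) n.+2) (le_mod_refl u) => k u_le.
  apply: le_mod_trans u_le_uy _; apply: le_mod_trans (le_mod_mul2r y u_le) _.
  rewrite hpowSr -hmulA; apply: le_mod_trans (le_mod_mul2l _ xy_neg) _.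
  by rewrite hmulr1; apply: le_mod_refl.
apply: le_mod_trans (le_mod_mul2r y (le_mod_trans sqr_le_u u_neg)) _.
rewrite hmul1r; apply: le_mod_trans xy_neg.
by have := le_mod_mul2r y x_pos; rewrite hmul1r.
Qed.

Lemma le_mod_sqr x y : x · y ≼ e <-> x · (x · y) ≼ e.
Proof.
have [x_neg | x_pos] := m_total x; split=> h.
- by apply: le_mod_trans h; have := le_mod_mul2r (x · y) x_neg; rewrite hmul1r.
- exact: le_mod_sqr_neg.
- exact: le_mod_sqr_pos.
- by apply: le_mod_trans h; have := le_mod_mul2r (x · y) x_pos; rewrite hmul1r.
Qed.

End Modulo.

Definition conj_core d :=
  foldr (fun u c => hlambda S u d ⊓ hrho S u d ⊓ c) e (enum T).

Lemma conj_core_le1 d : conj_core d ≤ e.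
Proof.
rewrite /conj_core; elim: (enum T) => [|u s IH] /=; first exact: hle_refl.
exact: hle_trans (hleIr _ _) IH.
Qed.

Lemma conj_core_le_conj d u : conj_core d ≤ hlambda S u d /\ conj_core d ≤ hrho S u d.
Proof.
rewrite /conj_core; have : u \in enum T by rewrite mem_enum.
elim: (enum T) => //= v s IH; rewrite in_cons => /predU1P [<- | /IH [le_l le_r]].
  by split; apply: hle_trans (hleIl _ _) _; [apply: hleIl | apply: hleIr].
by split; apply: hle_trans (hleIr _ _) _.
Qed.

Lemma conj_core_le d : conj_core d ≤ d.
Proof.
have [le_l _] := conj_core_le_conj d e.
by rewrite hlambda1 in le_l; apply: hle_trans le_l (hleIl _ _).
Qed.

(* Iterating [core_step] reaches a fixed point g by finiteness; then g lies
   below all its conjugates, which makes it central and idempotent. *)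
Definition core_step d := conj_core d · conj_core d.

Lemma core_step_le d : core_step d ≤ d.
Proof. exact: hle_trans (hmulr_le _ (conj_core_le1 d)) (conj_core_le d). Qed.

Definition idem_core d := iter #|T| core_step d.

Lemma idem_core_le d : idem_core d ≤ d.
Proof. exact: iter_deflationary core_step_le. Qed.

Lemma central_idem_core d : central_idem (idem_core d).
Proof.
set g := idem_core d.
have g_fixed : core_step g = g := iter_deflationary_fixed d core_step_le.
have conj_g : conj_core g = g.
  apply: hle_anti; first exact: conj_core_le.
  by rewrite -{1}g_fixed; apply: hmulr_le; apply: conj_core_le1.
split.
- by rewrite -conj_g; apply: conj_core_le1.
- by rewrite -{3}g_fixed /core_step conj_g.
- move=> u; have [le_l le_r] := conj_core_le_conj g u; rewrite conj_g in le_l le_r.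
  apply: hle_anti.
  + by apply/hle_rdiv; apply: hle_trans le_r (hleIl _ _).
  + by apply/hle_ldiv; apply: hle_trans le_l (hleIl _ _).
Qed.

Definition down m := [pred y | y ⊓ m == y].

Lemma card_down_lt n m : n ≤ m -> ~ m ≤ n -> #|down n| < #|down m|.
Proof.
move=> nm mn; apply/proper_card/properP; split.
  by apply/subsetP => y; rewrite !inE => /eqP yn; apply/eqP; apply: hle_trans yn nm.
by exists m; rewrite !inE; apply/eqP => //; apply: hle_refl.
Qed.

Section SemilinearDescent.
Hypothesis psl : psl_identity S.

Definition unit_split a b := [/\ a ≤ e, b ≤ e & e ≤ a ⊔ b].

Lemma unit_split_join a b : unit_split a b -> a ⊔ b = e.
Proof. by case=> a_le b_le e_le; apply: hle_anti => //; apply: hleUx. Qed.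

Lemma unit_split_div w : unit_split (ld (w ⊔ e) w ⊓ e) (ld (w ⊔ e) e ⊓ e).
Proof.
split; try exact: hleIr.
by have := psl w e e e; rewrite hlambda1 hrho1 => ->; apply: hle_refl.
Qed.

Lemma unit_split_lambda u a b : unit_split a b -> unit_split (hlambda S u a) b.
Proof.
move=> ab; have join_ab := unit_split_join ab; case: ab => _ b_le _.
have := psl a b u e; rewrite join_ab !hldiv1 hrho1 (_ : b ⊓ e = b) // => join_e.
by split=> //; [apply: hleIr | rewrite join_e; apply: hle_refl].
Qed.

Lemma unit_split_rho u a b : unit_split a b -> unit_split (hrho S u a) b.
Proof.
move=> ab; have join_ab := unit_split_join ab; case: ab => _ b_le _.
have := psl b a e u.
rewrite (hjoinC b a) join_ab !hldiv1 hlambda1 (_ : b ⊓ e = b) // => join_e.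
by split=> //; [apply: hleIr | rewrite hjoinC join_e; apply: hle_refl].
Qed.

Lemma unit_split_mull a b c : unit_split a c -> unit_split b c -> unit_split (a · b) c.
Proof.
move=> [a_le c_le ac] [b_le _ bc]; split=> //.
  exact: hle_trans (hmulr_le _ b_le) a_le.
apply: hle_trans (_ : e ≤ (a ⊔ c) · (b ⊔ c)) _.
  by rewrite -{1}(hmul1r e); apply: hle_trans (hle_mul2r e ac) (hle_mul2l _ bc).
rewrite hmulUl !hmulUr; apply: hleUx; apply: hleUx.
- exact: hleUl.
- exact: hle_trans (hmull_le _ a_le) (hleUr _ _).
- exact: hle_trans (hmulr_le _ b_le) (hleUr _ _).
- exact: hle_trans (hmull_le _ c_le) (hleUr _ _).
Qed.

Lemma unit_split_meetl a b c : unit_split a c -> unit_split b c -> unit_split (a ⊓ b) c.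
Proof.
move=> ac bc; have [ab_le c_le e_le] := unit_split_mull ac bc.
case: ac bc => [a_le _ _] [b_le _ _].
split=> //; first exact: hle_trans (hleIl _ _) a_le.
apply: hle_trans e_le _; apply: hleUx; last exact: hleUr.
by apply: hle_trans (hleUl _ c); apply: hlexI; [apply: hmulr_le | apply: hmull_le].
Qed.

Lemma unit_split_conj_core a b : unit_split a b -> unit_split (conj_core a) b.
Proof.
move=> ab; rewrite /conj_core; elim: (enum T) => [|u s IH] /=.
  by case: ab => _ b_le _; split=> //; [apply: hle_refl | apply: hleUl].
apply: unit_split_meetl IH; apply: unit_split_meetl.
  exact: unit_split_lambda.
exact: unit_split_rho.
Qed.

Lemma unit_split_idem_core a b : unit_split a b -> unit_split (idem_core a) (idem_core b).
Proof.
have step a' b' : unit_split a' b' -> unit_split (core_step a') b'.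
  by move=> ab'; apply: unit_split_mull; apply: unit_split_conj_core.
have sym a' b' : unit_split a' b' -> unit_split b' a'.
  by case=> a_le b_le e_le; split; rewrite // hjoinC.
by move=> ab; rewrite /idem_core; elim: #|T| => //= n /step /sym /step /sym.
Qed.

Lemma central_idem_refine m z w :
    central_idem m -> ~ le_mod m z e -> ~ le_mod m w e -> ~ le_mod m e w ->
  exists n, [/\ central_idem n, n ≤ m, ~ m ≤ n & ~ le_mod n z e].
Proof.
move=> m_idem mz mw_neg mw_pos; have [m_le _ m_c] := m_idem.
set P := ld (w ⊔ e) w ⊓ e; set Q := ld (w ⊔ e) e ⊓ e.
have m_join : m · idem_core P ⊔ m · idem_core Q = m.
  by rewrite -hmulUr (unit_split_join (unit_split_idem_core (unit_split_div w))) hmulr1.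
have refined k : ~ m ≤ k -> ~ le_mod (m · idem_core k) z e ->
    exists n, [/\ central_idem n, n ≤ m, ~ m ≤ n & ~ le_mod n z e].
  move=> mk nz; have k_idem := central_idem_core k.
  exists (m · idem_core k); split=> //; first exact: central_idemM.
    by case: k_idem => k_le _ _; apply: hmulr_le.
  move=> mmk; apply: mk; apply: hle_trans mmk _.
  exact: hle_trans (hmull_le _ m_le) (idem_core_le k).
have mP : ~ m ≤ P.
  move=> m_le_div; apply: mw_pos.
  have /hle_ldiv mwe := hle_trans m_le_div (hleIl _ _).
  by rewrite /le_mod hmulr1 -{1}(hmul1r m); apply: hle_trans (hle_mul2r m (hleUr w e)) mwe.
have mQ : ~ m ≤ Q.
  move=> m_le_div; apply: mw_neg.
  have /hle_ldiv mwe := hle_trans m_le_div (hleIl _ _).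
  by rewrite /le_mod m_c; apply: hle_trans (hle_mul2r m (hleUl w e)) mwe.
case: ((m · idem_core P) · z ⊓ e =P (m · idem_core P) · z) => [Pz|]; last exact: refined.
case: ((m · idem_core Q) · z ⊓ e =P (m · idem_core Q) · z) => [Qz|]; last exact: refined.
by case: mz; rewrite /le_mod -m_join hmulUl; apply: hleUx.
Qed.

Lemma exists_total_mod z : ~ z ≤ e ->
  exists m, [/\ central_idem m, total_mod m & ~ le_mod m z e].
Proof.
move=> nz.
suff descend m : central_idem m -> ~ le_mod m z e ->
    exists m', [/\ central_idem m', total_mod m' & ~ le_mod m' z e].
  by apply: descend; [apply: central_idem1 | rewrite /le_mod hmul1r].
have [k] := ubnP #|down m|; elim: k m => // k IH m lt_k m_idem mz.
have [/forallP total | /forallPn [w]] :=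
  boolP [forall w, (m · w ⊓ e == m · w) || (m · e ⊓ w == m · e)].
  by exists m; split=> // w; have /orP [/eqP | /eqP] := total w; [left | right].
rewrite negb_or => /andP [/eqP mw_neg /eqP mw_pos].
have [n [n_idem nm mn n_z]] := central_idem_refine m_idem mz mw_neg mw_pos.
exact: IH (leq_trans (card_down_lt nm mn) lt_k) n_idem n_z.
Qed.

Lemma hmul_le1_sqr x y : x · y ≤ e <-> x · (x · y) ≤ e.
Proof.
split=> h.
  case: (x · (x · y) ⊓ e =P x · (x · y)) => //.
  move=> /exists_total_mod [m [m_idem m_total nle]].
  by case: nle; apply/(le_mod_sqr m_idem m_total x y).1/le_mod_of_le.
case: (x · y ⊓ e =P x · y) => // /exists_total_mod [m [m_idem m_total nle]].
by case: nle; apply/(le_mod_sqr m_idem m_total x y).2/le_mod_of_le.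
Qed.

Lemma finite_omega_law : omega_law S.
Proof.
move=> x; apply: hle_anti; apply/hle_ldiv.
  by rewrite -hmulA; apply/(hmul_le1_sqr x _).1/hle_ldiv; apply: hle_refl.
by apply/(hmul_le1_sqr x _).2; rewrite hmulA; apply/hle_ldiv; apply: hle_refl.
Qed.

End SemilinearDescent.

End FiniteResiduatedLattice.

Lemma HpsUL_finite_omega (T : finType) (S : hpsul_ops T) : HpsUL S -> omega_law S.
Proof. by case=> lat mon res psl; apply: finite_omega_law. Qed.

Theorem lemma2p6 :
  (forall (T : finType) (S : hpsul_ops T),
      HpsUL_star S -> is_chain S -> HpsUL_star_omega S /\ is_chain S) /\
  (forall (T : finType) (S : hpsul_ops T),
      HpsUL_star S -> HpsUL_star_omega S).
Proof.
have star_omega (T : finType) (S : hpsul_ops T) : HpsUL_star S -> HpsUL_star_omega S.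
  by move=> [HS wc]; split; [split | apply: HpsUL_finite_omega].
by split=> T S /star_omega.
Qed.
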